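(* Let $T=\{0,\dots,N\}$, let $M_\bullet$ and $P_\bullet$ be filtrations of finite-dimensional vector spaces $M=M_N$ and $P=P_N$ over a field $\mathbb{F}$ indexed by $T$, and let $\phi_\bullet\colon M_\bullet\to P_\bullet$ be a morphism of filtrations, i.e. a linear map $\phi\colon M\to P$ with $\phi(M_t)\subseteq P_t$ for all $t$ and $\phi_t=\phi|_{M_t}\colon M_t\to P_t$. Let $\mathfrak{M}$ be a filtration compatible basis for $M_\bullet$, let $\mathfrak{M}'=\mathfrak{M}\cap\ker\phi$, and assume that $\mathfrak{M}''=(\phi(m))_{m\in\mathfrak{M}\setminus\mathfrak{M}'}$ is a linearly independent family of vectors. Then $\mathfrak{M}'$ is a filtration compatible basis for the filtration $\ker\phi_\bullet$ (with $(\ker\phi_\bullet)_t=\ker\phi_t$), and $\mathfrak{M}''$ is a filtration compatible basis for the filtration $\operatorname{im}\phi_\bullet$ (with $(\operatorname{im}\phi_\bullet)_t=\operatorname{im}\phi_t$). Moreover, \[ \operatorname{supp}_{\ker\phi_\bullet}(m')=\operatorname{supp}_{M_\bullet}(m')\quad\text{and}\quad\operatorname{supp}_{\operatorname{im}\phi_\bullet}(\phi(m))=\operatorname{supp}_{M_\bullet}(m) \] for all $m'\in\mathfrak{M}'$ and all $m\in\mathfrak{M}\setminus\mathfrak{M}'$.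
   Context: A filtration of a vector space $M$ indexed by $T=\{0,\dots,N\}$ is a family of subspaces $M_0\subseteq\dots\subseteq M_N=M$, with structure maps the inclusions. For $m\in M$, its support is $\operatorname{supp}_{M_\bullet}(m)=\{t\in T\mid m\in M_t\}$. A basis $\mathfrak{M}$ of $M$ is filtration compatible if $\mathfrak{M}\cap M_t$ is a basis of $M_t$ for every $t\in T$ (for a family of vectors, this is understood in the same way, the family being a basis of $M$). *)

From HB Require Import structures.
From mathcomp Require Import all_boot all_order all_algebra.
Set Implicit Arguments. Unset Strict Implicit. Unset Printing Implicit Defensive.
Import GRing.Theory.
Local Open Scope ring_scope.

Definition is_filtration (F : fieldType) (vT : vectType F) (N : nat)
  (Fl : 'I_N.+1 -> {vspace vT}) (U : {vspace vT}) : Prop :=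
  (forall s t : 'I_N.+1, (s <= t)%N -> (Fl s <= Fl t)%VS) /\ Fl ord_max = U.

Definition filt_compat_basis (F : fieldType) (vT : vectType F) (N : nat)
  (Fl : 'I_N.+1 -> {vspace vT}) (B : seq vT) : Prop :=
  forall t : 'I_N.+1, basis_of (Fl t) [seq v <- B | v \in Fl t].

Definition supp (F : fieldType) (vT : vectType F) (N : nat)
  (Fl : 'I_N.+1 -> {vspace vT}) (v : vT) : {set 'I_N.+1} :=
  [set t | v \in Fl t].

Definition ker_filt (F : fieldType) (vT wT : vectType F) (N : nat)
  (phi : 'Hom(vT, wT)) (Fl : 'I_N.+1 -> {vspace vT}) : 'I_N.+1 -> {vspace vT} :=
  fun t => (lker phi :&: Fl t)%VS.

Definition im_filt (F : fieldType) (vT wT : vectType F) (N : nat)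
  (phi : 'Hom(vT, wT)) (Fl : 'I_N.+1 -> {vspace vT}) : 'I_N.+1 -> {vspace wT} :=
  fun t => (phi @: Fl t)%VS.

From HB Require Import structures.
From mathcomp Require Import all_boot all_order all_algebra.
Import GRing.Theory.
Local Open Scope ring_scope.

Set Implicit Arguments.
Unset Strict Implicit.
Unset Printing Implicit Defensive.

(* At level t
   the members of B lying in M_t form a basis X of M_t.  The nonzero images
   of X span phi(M_t) and are free, hence a basis of it, and by rank-nullity
   the members of X killed by phi are a basis of ker phi_t.  The image
   supports come from the fact that a member of a free family lies in the
   span of a subfamily only if it belongs to that subfamily. *)

Lemma filter_comm (T : Type) (a b : pred T) (s : seq T) :
  filter a (filter b s) = filter b (filter a s).
Proof. by rewrite -!filter_predI; apply: eq_filter => x /=; rewrite andbC. Qed.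

Section FreeMapFilter.

Variables (F : fieldType) (vT : vectType F) (I : eqType).
Variables (g : I -> vT) (s : seq I) (P : pred I).
Hypothesis free_gs : free (map g s).

Lemma free_map_filterC :
  free (map g (filter P s) ++ map g (filter (predC P) s)).
Proof.
by rewrite -map_cat (perm_free (perm_map g (permEl (perm_filterC P s)))).
Qed.

Lemma free_map_filter : free (map g (filter P s)).
Proof. exact: catl_free free_map_filterC. Qed.

Lemma mem_span_map_filter i :
  i \in s -> (g i \in <<map g (filter P s)>>%VS) = P i.
Proof.
move=> si; have [Pi | nPi] := boolP (P i).
  by apply: memv_span; rewrite map_f // mem_filter Pi.
apply/negP => gi_in.
have gi_nz : g i != 0 by apply: free_not0 free_gs _; rewrite map_f.
have /directv_addP cap0 :
    directv (<<map g (filter P s)>> + <<map g (filter (predC P) s)>>).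
  by have := free_map_filterC; rewrite cat_free => /and3P[].
have : g i \in (<<map g (filter P s)>> :&: <<map g (filter (predC P) s)>>)%VS.
  by rewrite memv_cap gi_in memv_span // map_f // mem_filter /= nPi.
by rewrite cap0 memv0 (negPf gi_nz).
Qed.

End FreeMapFilter.

Section KernelImageBasis.

Variables (F : fieldType) (vT wT : vectType F) (f : 'Hom(vT, wT)).
Variables (U : {vspace vT}) (X : seq vT).
Hypothesis basisX : basis_of U X.
Hypothesis free_fX : free (map f [seq x <- X | f x != 0]).

Lemma span_map_filter_neq0 :
  span (map f X) = span (map f [seq x <- X | f x != 0]).
Proof.
have /permEl/(perm_map f)/perm_mem/eq_span <- :=
  perm_filterC (fun x => f x != 0) X.
rewrite map_cat span_cat; apply/addv_idPl/span_subvP => y /mapP[x].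
by rewrite mem_filter /= negbK => /andP[/eqP fx0 _] ->; rewrite fx0 mem0v.
Qed.

Lemma limg_basis : basis_of (f @: U) (map f [seq x <- X | f x != 0]).
Proof.
by rewrite /basis_of -(span_basis basisX) limg_span span_map_filter_neq0 eqxx.
Qed.

Lemma lker_basis : basis_of (lker f :&: U) [seq x <- X | f x == 0].
Proof.
rewrite basisEfree filter_free ?(basis_free basisX) //=; apply/andP; split.
  apply/span_subvP => x; rewrite mem_filter memv_cap memv_ker => /andP[-> Xx].
  exact: basis_mem basisX Xx.
have dimU : \dim U = size X.
  by rewrite -(span_basis basisX) (eqnP (basis_free basisX)).
have dim_im : \dim (f @: U) = size [seq x <- X | f x != 0].
  by rewrite -(span_basis limg_basis) (eqnP free_fX) size_map.
have sizeX :
    size X = addn (count (fun x => f x == 0) X) (count (fun x => f x != 0) X).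
  by rewrite -(count_predC (fun x => f x == 0)); apply/eqP.
have := limg_ker_dim f U.
by rewrite capvC dimU dim_im sizeX !size_filter => /addIn ->.
Qed.

End KernelImageBasis.

Theorem lemma2p7 (F : fieldType) (vT wT : vectType F) (N : nat)
  (Mf : 'I_N.+1 -> {vspace vT}) (Pf : 'I_N.+1 -> {vspace wT})
  (phi : 'Hom(vT, wT)) (B : seq vT) :
  is_filtration Mf fullv ->
  is_filtration Pf fullv ->
  (forall t : 'I_N.+1, (phi @: Mf t <= Pf t)%VS) ->
  filt_compat_basis Mf B ->
  free [seq phi m | m <- [seq m <- B | phi m != 0]] ->
  [/\ filt_compat_basis (ker_filt phi Mf) [seq m <- B | phi m == 0],
      filt_compat_basis (im_filt phi Mf) [seq phi m | m <- [seq m <- B | phi m != 0]],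
      (forall m, m \in [seq m <- B | phi m == 0] ->
         supp (ker_filt phi Mf) m = supp Mf m)
    & (forall m, m \in [seq m <- B | phi m != 0] ->
         supp (im_filt phi Mf) (phi m) = supp Mf m)].
Proof.
move=> _ _ _ basisB freeIm; set B2 := [seq m <- B | phi m != 0] in freeIm *.
have free_t t :
    free (map phi [seq x <- [seq v <- B | v \in Mf t] | phi x != 0]).
  by rewrite filter_comm; apply: free_map_filter freeIm.
have im_basis t : basis_of (phi @: Mf t) (map phi [seq m <- B2 | m \in Mf t]).
  by rewrite /B2 filter_comm; apply: limg_basis (basisB t) (free_t t).
have mem_im t m : m \in B2 -> (phi m \in (phi @: Mf t)%VS) = (m \in Mf t).
  rewrite -(span_basis (im_basis t)).
  exact: (mem_span_map_filter (mem (Mf t)) freeIm).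
split.
- move=> t; rewrite /ker_filt -filter_predI.
  rewrite (@eq_filter _ _ (predI (fun x => phi x == 0) (mem (Mf t)))); last first.
    by move=> x; rewrite /= memv_cap memv_ker andbAC andbb.
  by rewrite filter_predI; apply: lker_basis (basisB t) (free_t t).
- move=> t; rewrite /im_filt filter_map (eq_in_filter (mem_im t)).
  exact: im_basis.
- move=> m; rewrite mem_filter => /andP[/eqP phim0 _]; apply/setP => t.
  by rewrite !inE /ker_filt memv_cap memv_ker phim0 eqxx.
- by move=> m B2m; apply/setP => t; rewrite !inE /im_filt mem_im.
Qed.
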